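(* Let $c,d$ be positive integers and define $\phi_{c,d}:\mathbb Z_{>0}^2\to\mathbb Z_{>0}^2$ by $\phi_{c,d}(s,t)=(c,d)$ if $s=t$, $(s-t,d)$ if $s>t$, and $(c,t-s)$ if $s<t$. Let $(c_1,d_1)=(c,d)$ and $(c_{k+1},d_{k+1})=\phi_{c,d}(c_k,d_k)$ for $k\ge1$. Put $e=c/\gcd(c,d)$, $e'=d/\gcd(c,d)$ and $p=e+e'-1$. Then $(c_{k+p},d_{k+p})=(c_k,d_k)$ for all $k\ge1$. Moreover, for arbitrary integers $\tilde c,\tilde d$, define for $k\ge2$: $\mu_k=\min\{c_k,d_k\}$ and $\nu_k=\tilde c+\tilde d$ if $c_k=d_k$, $\nu_k=\tilde d$ if $c_k>d_k$, $\nu_k=\tilde c$ if $c_k<d_k$. Then $$\sum_{k=2}^{p+1}\mu_k=\mathrm{lcm}(c,d),\qquad \sum_{k=2}^{p+1}\nu_k=e\tilde d+e'\tilde c.$$ *)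

From mathcomp Require Import all_boot all_order all_algebra.
Set Implicit Arguments. Unset Strict Implicit. Unset Printing Implicit Defensive.
Import GRing.Theory Num.Theory.

Definition phi (c d : nat) (st : nat * nat) : nat * nat :=
  let: (s, t) := st in
  if s == t then (c, d)
  else if t < s then (s - t, d) else (c, t - s).

(* (c_k, d_k) for k >= 1: (c_1,d_1) = (c,d), (c_{k+1},d_{k+1}) = phi (c_k,d_k).
   (Index 0 is not used; it coincides with index 1.) *)
Definition cdseq (c d k : nat) : nat * nat := iter k.-1 (phi c d) (c, d).

Definition ck (c d k : nat) : nat := (cdseq c d k).1.
Definition dk (c d k : nat) : nat := (cdseq c d k).2.

Definition mu (c d k : nat) : nat := minn (ck c d k) (dk c d k).

Definition nu (c d : nat) (ct dt : int) (k : nat) : int :=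
  if ck c d k == dk c d k then (ct + dt)%R
  else if dk c d k < ck c d k then dt else ct.

(* Let [gap m x := m - x %% m] be the distance from [x] to the next multiple of
   [m], and let [x_0 = 0 < x_1 < ...] enumerate the merged grid of positive
   multiples of [c] and of [d].  The gap pair [(gap c x, gap d x)] evolves from
   one grid point to the next exactly by [phi_{c,d}], so [(c_k, d_k)] is the gap
   pair at [x_{k-1}], [mu_k = x_k - x_{k-1}] and
   [nu_k = c~ * (increment of x %/ c) + d~ * (increment of x %/ d)].
   Each step lands on a multiple of [c], of [d], or, exactly when it lands on a
   multiple of [lcm(c,d)], of both; hence [x %/ c + x %/ d] counts the steps
   below [lcm(c,d)], and since [lcm(c,d)] contributes [e' + e] to this count it
   is the grid point [x_p].  The grid is invariant under translation by
   [lcm(c,d)], which gives the period, and both sums telescope. *)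
From mathcomp Require Import all_boot all_order all_algebra.
From mathcomp Require Import zify.
Set Implicit Arguments. Unset Strict Implicit. Unset Printing Implicit Defensive.
Import GRing.Theory Num.Theory.

Definition gap (m x : nat) : nat := m - x %% m.

Definition next_mult (c d x : nat) : nat := x + minn (gap c x) (gap d x).

Definition grid (c d j : nat) : nat := iter j (next_mult c d) 0.

Lemma gridS c d j : grid c d j.+1 = next_mult c d (grid c d j).
Proof. exact: iterS. Qed.

Lemma gap_gt0 m x : 0 < m -> 0 < gap m x.
Proof. by move=> m_gt0; rewrite subn_gt0 ltn_pmod. Qed.

Lemma addn_gap m x : 0 < m -> x + gap m x = (x %/ m).+1 * m.
Proof.
move=> m_gt0; have := ltn_pmod x m_gt0.
by rewrite /gap {1}(divn_eq x m) mulSn; lia.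
Qed.

Lemma gap_addn_dvd m n x : m %| n -> gap m (x + n) = gap m x.
Proof. by move=> /eqP mn0; rewrite /gap -modnDmr mn0 addn0. Qed.

Lemma leq_divn_succ_mul m x y : 0 < m -> x < y -> m %| y -> (x %/ m).+1 * m <= y.
Proof.
move=> m_gt0 lt_xy /dvdnP[q yq].
by rewrite yq leq_mul2r ltn_divLR // -yq lt_xy orbT.
Qed.

Lemma next_multC c d x : next_mult c d x = next_mult d c x.
Proof. by rewrite /next_mult minnC. Qed.

Lemma next_mult_gt c d x : 0 < c -> 0 < d -> x < next_mult c d x.
Proof. by move=> c_gt0 d_gt0; rewrite -addn1 leq_add2l leq_min !gap_gt0. Qed.

Lemma next_mult_le_gap c d x : 0 < c -> gap c x <= gap d x ->
  next_mult c d x = (x %/ c).+1 * c.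
Proof. by move=> c_gt0 le_cd; rewrite /next_mult (minn_idPl le_cd) addn_gap. Qed.

Lemma next_mult_gt_gap c d x : gap d x < gap c x ->
  next_mult c d x = x %/ c * c + (x %% c + gap d x) /\ x %% c + gap d x < c.
Proof.
move=> lt_dc; rewrite /next_mult (minn_idPr (ltnW lt_dc)).
by move: lt_dc; rewrite {2}/gap; have := divn_eq x c; lia.
Qed.

Lemma dvdn_next_mult c d x : 0 < c -> 0 < d ->
  (c %| next_mult c d x) = (gap c x <= gap d x).
Proof.
move=> c_gt0 d_gt0; case: leqP => [le_cd | lt_dc].
  by rewrite next_mult_le_gap // dvdn_mull.
have [-> lt_c] := next_mult_gt_gap lt_dc.
rewrite dvdn_addr ?dvdn_mull // /dvdn modn_small // addn_eq0.
by rewrite [gap d x == 0]eqn0Ngt gap_gt0 // andbF.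
Qed.

Lemma divn_next_mult c d x : 0 < c ->
  next_mult c d x %/ c = x %/ c + (gap c x <= gap d x).
Proof.
move=> c_gt0; case: leqP => [le_cd | lt_dc].
  by rewrite next_mult_le_gap // mulnK // addn1.
have [-> lt_c] := next_mult_gt_gap lt_dc.
by rewrite divnMDl // (divn_small lt_c) addn0.
Qed.

Lemma gap_next_mult c d x : 0 < c ->
  gap c (next_mult c d x) = if gap c x <= gap d x then c else gap c x - gap d x.
Proof.
move=> c_gt0; case: leqP => [le_cd | lt_dc].
  by rewrite next_mult_le_gap // /gap modnMl subn0.
have [-> lt_c] := next_mult_gt_gap lt_dc.
by rewrite /gap modnMDl modn_small //; lia.
Qed.

Lemma phi_gap c d x : 0 < c -> 0 < d ->
  phi c d (gap c x, gap d x)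
  = (gap c (next_mult c d x), gap d (next_mult c d x)).
Proof.
move=> c_gt0 d_gt0; rewrite /phi gap_next_mult // next_multC gap_next_mult //.
by case: ltngtP.
Qed.

Lemma cdseq_grid c d k : 0 < c -> 0 < d ->
  cdseq c d k.+1 = (gap c (grid c d k), gap d (grid c d k)).
Proof.
move=> c_gt0 d_gt0; rewrite /cdseq /=; elim: k => [|k IHk].
  by rewrite /gap !mod0n !subn0.
by rewrite iterS IHk phi_gap.
Qed.

Lemma next_mult_addn_lcm c d x :
  next_mult c d (x + lcmn c d) = next_mult c d x + lcmn c d.
Proof.
rewrite /next_mult !gap_addn_dvd ?dvdn_lcml ?dvdn_lcmr //.
by rewrite addnAC.
Qed.

Lemma iter_next_mult_addn_lcm c d j x :
  iter j (next_mult c d) (x + lcmn c d) = iter j (next_mult c d) x + lcmn c d.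
Proof. by elim: j => [|j IHj] //; rewrite !iterS IHj next_mult_addn_lcm. Qed.

Section OnePeriod.

Variables c d : nat.
Hypotheses (c_gt0 : 0 < c) (d_gt0 : 0 < d).

Local Notation L := (lcmn c d).
Local Notation e := (c %/ gcdn c d).
Local Notation e' := (d %/ gcdn c d).
Local Notation p := (e + e' - 1).

Lemma lcmn_divl : L %/ c = e'.
Proof. by rewrite /lcmn -muln_divA ?dvdn_gcdr // mulKn. Qed.

Lemma lcmn_divr : L %/ d = e.
Proof. by rewrite /lcmn -divn_mulAC ?dvdn_gcdl // mulnK. Qed.

Lemma lcm_gt0 : 0 < L.
Proof. by rewrite lcmn_gt0 c_gt0. Qed.

Definition crossings (y : nat) : nat := y %/ c + y %/ d.

Lemma crossings_lcm : crossings L = p.+1.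
Proof.
have e_gt0 : 0 < e by rewrite -lcmn_divr divn_gt0 // dvdn_leq ?lcm_gt0 ?dvdn_lcmr.
by rewrite /crossings lcmn_divl lcmn_divr subn1 prednK ?addn_gt0 ?e_gt0 // addnC.
Qed.

Lemma crossings_lt_lcm y : y < L -> crossings y < p.
Proof.
move=> lt_yL.
have lt_c : y %/ c < e' by rewrite ltn_divLR // -lcmn_divl divnK ?dvdn_lcml.
have lt_d : y %/ d < e by rewrite ltn_divLR // -lcmn_divr divnK ?dvdn_lcmr.
by move: lt_c lt_d; rewrite /crossings; move: (y %/ c) (y %/ d) e e'; lia.
Qed.

Lemma crossings_next_mult x :
  crossings (next_mult c d x) = (crossings x).+1 + (L %| next_mult c d x).
Proof.
rewrite /crossings dvdn_lcm divn_next_mult // dvdn_next_mult //.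
rewrite next_multC divn_next_mult // dvdn_next_mult //.
case: leqP => [_ | /ltnW ->]; case: (gap d x <= gap c x);
  by move: (x %/ c) (x %/ d) => a b /=; lia.
Qed.

Lemma next_mult_le_lcm x : x < L -> next_mult c d x <= L.
Proof.
move=> lt_xL; apply: leq_trans (leq_divn_succ_mul c_gt0 lt_xL (dvdn_lcml c d)).
by rewrite -addn_gap // leq_add2l geq_minl.
Qed.

Lemma crossings_next_mult_lt_lcm x : x < L ->
  crossings (next_mult c d x) = (crossings x).+1 + (next_mult c d x == L).
Proof.
move=> lt_xL; rewrite crossings_next_mult; congr (_ + nat_of_bool _).
have le_nL := next_mult_le_lcm lt_xL.
apply/idP/eqP => [dvd_Ln | ->]; last exact: dvdnn.
have lt_xn := next_mult_gt x c_gt0 d_gt0.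
by apply/eqP; rewrite eqn_leq le_nL dvdn_leq // (leq_ltn_trans _ lt_xn).
Qed.

Lemma crossings_grid j : grid c d j < L -> crossings (grid c d j) = j.
Proof.
elim: j => [|j IHj]; first by rewrite /crossings /grid /= !div0n.
rewrite gridS => lt_nL; have lt_xL := ltn_trans (next_mult_gt _ c_gt0 d_gt0) lt_nL.
by rewrite crossings_next_mult_lt_lcm // IHj // ltn_eqF // addn0.
Qed.

Lemma grid_lt_lcm j : j < p -> grid c d j < L.
Proof.
elim: j => [|j IHj] lt_jp; first exact: lcm_gt0.
have lt_xL := IHj (ltnW lt_jp).
rewrite gridS ltn_neqAle next_mult_le_lcm // andbT; apply/eqP => nL.
have := crossings_next_mult_lt_lcm lt_xL.
by rewrite crossings_grid // nL eqxx crossings_lcm; lia.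
Qed.

Lemma grid_period : grid c d p = L.
Proof.
have p_gt0 : 0 < p by have := crossings_lt_lcm lcm_gt0; rewrite /crossings !div0n.
have lt_xL : grid c d p.-1 < L by apply: grid_lt_lcm; rewrite ltn_predL.
have := next_mult_le_lcm lt_xL; rewrite -gridS prednK // leq_eqVlt.
case/orP => [/eqP // | lt_gL].
by have := crossings_lt_lcm lt_gL; rewrite crossings_grid // ltnn.
Qed.

Lemma grid_addn_period j : grid c d (j + p) = grid c d j + L.
Proof.
by rewrite /grid iterD -/(grid c d p) grid_period -[L]add0n iter_next_mult_addn_lcm.
Qed.

Lemma cdseq_addn_period k : 0 < k -> cdseq c d (k + p) = cdseq c d k.
Proof.
case: k => // k _; rewrite addSn !cdseq_grid // grid_addn_period.
by rewrite !gap_addn_dvd ?dvdn_lcml ?dvdn_lcmr.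
Qed.

Lemma mu_grid k : mu c d k.+1 = grid c d k.+1 - grid c d k.
Proof. by rewrite /mu /ck /dk cdseq_grid // gridS /next_mult addKn. Qed.

Lemma sum_mu_period : \sum_(2 <= k < p.+2) mu c d k = L.
Proof.
have grid_homo : {homo grid c d : i j / i <= j}.
  by apply: homo_leq => [//|j i k|j]; [apply: leq_trans | rewrite gridS ltnW ?next_mult_gt].
rewrite big_add1 /=; under eq_bigr do rewrite mu_grid.
by rewrite telescope_sumn // -add1n grid_addn_period addKn.
Qed.

Lemma nu_grid ct dt k : nu c d ct dt k.+1 =
  (ct * ((grid c d k.+1 %/ c)%:Z - (grid c d k %/ c)%:Z)
   + dt * ((grid c d k.+1 %/ d)%:Z - (grid c d k %/ d)%:Z))%R.
Proof.
rewrite /nu /ck /dk cdseq_grid // gridS divn_next_mult // next_multC.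
rewrite divn_next_mult // !PoszD !(addrC (Posz (_ %/ _))) !addrK.
by case: ltngtP => _ /=; rewrite ?mulr1 ?mulr0 ?addr0 ?add0r.
Qed.

Lemma sum_nu_period ct dt :
  (\sum_(2 <= k < p.+2) nu c d ct dt k)%R = (e%:Z * dt + e'%:Z * ct)%R.
Proof.
rewrite big_add1 /=; under eq_bigr do rewrite nu_grid.
rewrite big_split /= -!mulr_sumr !telescope_sumr // -add1n grid_addn_period.
rewrite !(divnDr (grid c d 1)) ?dvdn_lcml ?dvdn_lcmr // lcmn_divl lcmn_divr.
rewrite !(addnC (grid c d 1 %/ _)) !PoszD !addrK.
by rewrite addrC mulrC [(ct * _)%R]mulrC.
Qed.

End OnePeriod.

Theorem mainTheorem4 (c d : nat) (hc : 0 < c) (hd : 0 < d) (ct dt : int) :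
  let e := c %/ gcdn c d in
  let e' := d %/ gcdn c d in
  let p := (e + e' - 1)%N in
  (forall k : nat, 1 <= k -> cdseq c d (k + p) = cdseq c d k) /\
  (\sum_(2 <= k < p.+2) mu c d k)%N = lcmn c d /\
  (\sum_(2 <= k < p.+2) nu c d ct dt k)%R = (e%:Z * dt + e'%:Z * ct)%R.
Proof.
split; [exact: cdseq_addn_period | split; [exact: sum_mu_period | exact: sum_nu_period]].
Qed.
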